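(* Let $U$ be a $\kappa$-cut with sides $A_1,\dots,A_a$ ($a\ge 2$) and let $W\neq U$ be another $\kappa$-cut with sides $B_1,\dots,B_b$ ($b\ge 2$). Put $T=U\cap W$, $W_i=W\cap A_i$ and $U_j=U\cap B_j$. Then at least one of the following holds. (Laminar type) $W$ is a laminar cut of $U$, and there are indices $i^*,j^*$ with $B_{j^*}\setminus A_{i^*}=(U\setminus W)\cup\bigcup_{i\ne i^*}A_i$ and $A_{i^*}\setminus B_{j^*}=(W\setminus U)\cup\bigcup_{j\neq j^*}B_j$. (Wheel type) $a=b=2$ and $(T;U_1,W_1,U_2,W_2)$ forms a $4$-wheel with sectors $A_1\cap B_1$, $A_1\cap B_2$, $A_2\cap B_2$, $A_2\cap B_1$. (Crossing matching type) $a=b=2$ and, after possibly renaming the two sides of $U$ and/or of $W$, $A_1\cap B_1\ne\emptyset$, $A_2\cap B_2\neq\emptyset$, $A_1\cap B_2=\emptyset$; moreover $|W_2|=|U_1|>0$, $|W_1|=|U_2|>0$, $W$ is a crossing matching cut of $U$ in side $A_1$ with respect to $U_2$, and if in addition $A_2\cap B_1\neq\emptyset$ then $|U_1|\ge|U_2|$. (Small type) $U$ is $(\mathrm{I},\kappa-1)$-small and all small sides of $U$ are contained in $W$, or $W$ is $(\mathrm{I},\kappa-1)$-small and all small sides of $W$ are contained in $U$.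
   Context: Standing conventions: $G=(V,E)$ is a finite, simple, connected, undirected, non-complete graph with $n=|V|$; $\kappa$ is its vertex connectivity (minimum size of a vertex set whose removal disconnects $G$), and it is assumed that $\kappa<n/4$. A cut is a set $U\subset V$ such that the subgraph induced on $V\setminus U$ is disconnected; a $\kappa$-cut is a cut with exactly $\kappa$ vertices. A side of a cut $U$ is (the vertex set of) a connected component of the subgraph induced on $V\setminus U$. A set $S$ disconnects $P$ from the rest of the graph if $P\neq\emptyset$, $P\cap S=\emptyset$, $V\setminus(S\cup P)\ne\emptyset$ and every path from $P$ to $V\setminus(S\cup P)$ meets $S$. Laminar cut: if $U$ is a cut and $P$ a side of $U$, a cut $W$ with $W\subseteq U\cup P$ is a laminar cut of $U$ in side $P$; a laminar cut of $U$ is a laminar cut of $U$ in some side. Small cuts: a cut $U$ with sides $A_1,\dots,A_a$ is $(\mathrm{I},t)$-small if there is an index $i^\sharp$ with $\sum_{i\neq i^\sharp}|A_i|\le t$; then $A_{i^\sharp}$ is its large side and the other sides are its small sides. Wheels: for $w\ge4$ (indices taken modulo $w$), if $V$ is partitioned into pairwise disjoint sets $T,C_1,\dots,C_w,S_1,\dots,S_w$ with all $C_i,S_i$ nonempty ($T$ may be empty) such that for every $i$ the set $C_i\cup T\cup C_{i+2}$ is a $\kappa$-cut that disconnects $S_i\cup C_{i+1}\cup S_{i+1}$ from the rest of the graph, then $(T;C_1,\dots,C_w)$ forms a $w$-wheel with sectors $S_1,\dots,S_w$. Matching cuts: let $U$ be a cut, $A$ a side of $U$, $P\subseteq U$. A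 $\kappa$-cut $W$ is a matching cut of $U$ in side $A$ with respect to $P$ if (i) $U\setminus P\subseteq W\subseteq U\cup A$, (ii) $A\setminus W\neq\emptyset$, and (iii) $W$ disconnects $P\cup(V\setminus(U\cup A))$ from $A\setminus W$ (i.e., these sets are disjoint from $W$ and every path between them meets $W$). If $U$ has exactly two sides $A,B$ and $\emptyset\neq P\subseteq U$, a $\kappa$-cut $W$ is a crossing matching cut of $U$ in side $A$ with respect to $P$ if (i) $W\cap B\neq\emptyset$ and (ii) $(U\setminus P)\cup(W\cap A)$ is a matching cut of $U$ in side $A$ with respect to $P$. *)

(* A graph is a symmetric irreflexive relation e on a finType V. *)
From mathcomp Require Import all_boot.
Set Implicit Arguments. Unset Strict Implicit. Unset Printing Implicit Defensive.

Section Defs.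
Variable V : finType.
Variable e : rel V.

Definition avoid (S : {set V}) : rel V :=
  [rel x y | [&& e x y, x \notin S & y \notin S]].

Definition graph_connected : Prop := forall x y, connect e x y.
Definition non_complete : Prop := exists x y, x != y /\ ~~ e x y.

Definition is_cut (U : {set V}) : bool :=
  [exists x, exists y, [&& x \notin U, y \notin U & ~~ connect (avoid U) x y]].

Definition vertex_connectivity (k : nat) : Prop :=
  (exists U, is_cut U /\ #|U| = k) /\ (forall U, is_cut U -> k <= #|U|).

Definition kcut (k : nat) (U : {set V}) : bool := is_cut U && (#|U| == k).

(* A is a side of U: a connected component of the subgraph induced on V \ U *)
Definition is_side (U A : {set V}) : bool :=
  (A != set0) &&
  [forall x in A, A == [set y | (y \notin U) && connect (avoid U) x y]].

Definition sides (U : {set V}) : {set {set V}} := [set A | is_side U A].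

(* A : nat -> {set V} enumerates (indices 0..a-1) the sides of U without repetition *)
Definition enum_sides (U : {set V}) (a : nat) (A : nat -> {set V}) : Prop :=
  [/\ (forall i, i < a -> A i \in sides U),
      (forall X, X \in sides U -> exists2 i, i < a & A i = X) &
      (forall i j, i < a -> j < a -> A i = A j -> i = j)].

Definition disconnects (S P : {set V}) : Prop :=
  [/\ P != set0, [disjoint P & S], ~: (S :|: P) != set0 &
      forall x y, x \in P -> y \in ~: (S :|: P) -> ~~ connect (avoid S) x y].

Definition separates (S X Y : {set V}) : Prop :=
  [/\ [disjoint X & S], [disjoint Y & S] &
      forall x y, x \in X -> y \in Y -> ~~ connect (avoid S) x y].

Definition laminar_cut (U W : {set V}) : Prop :=
  is_cut W /\ exists2 P, P \in sides U & W \subset U :|: P.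

Definition small_with_large (t : nat) (U L : {set V}) : Prop :=
  is_cut U /\ L \in sides U /\ \sum_(X in sides U | X != L) #|X| <= t.

(* w-wheel (T; C_0,...,C_{w-1}) with sectors S_0,...,S_{w-1}; indices mod w *)
Definition forms_wheel (k w : nat) (T : {set V}) (C S : nat -> {set V}) : Prop :=
  4 <= w /\
  (forall i, i < w -> C i != set0 /\ S i != set0) /\
  (forall i j, i < w -> j < w -> i != j ->
      [disjoint C i & C j] /\ [disjoint S i & S j]) /\
  (forall i j, i < w -> j < w -> [disjoint C i & S j]) /\
  (forall i, i < w -> [disjoint T & C i] /\ [disjoint T & S i]) /\
  T :|: \bigcup_(i < w) (C i :|: S i) = setT /\
  (forall i, i < w ->
    kcut k (C i :|: T :|: C ((i + 2) %% w)) /\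
    disconnects (C i :|: T :|: C ((i + 2) %% w))
                (S i :|: C ((i + 1) %% w) :|: S ((i + 1) %% w))).

Definition matching_cut (k : nat) (U A P W : {set V}) : Prop :=
  [/\ kcut k W, U :\: P \subset W, W \subset U :|: A, A :\: W != set0 &
      separates W (P :|: ~: (U :|: A)) (A :\: W)].

Definition crossing_matching_cut (k : nat) (U A P W : {set V}) : Prop :=
  [/\ #|sides U| = 2, A \in sides U, P != set0, P \subset U &
      kcut k W] /\
  exists B, [/\ B \in sides U, B != A, W :&: B != set0 &
                matching_cut k U A P ((U :\: P) :|: (W :&: A))].

End Defs.

From mathcomp Require Import all_boot.
From mathcomp Require Import zify.
Set Implicit Arguments. Unset Strict Implicit. Unset Printing Implicit Defensive.

(* The argument lives in the four kinds of pieces determined by U and W: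
   T = U ∩ W, the traces W ∩ X of W on the sides X of U, the traces U ∩ Y
   of U on the sides Y of W, and the corners X ∩ Y.  Two facts drive it.
   (1) Every vertex of a minimum cut has a neighbour in every side of it
       ([min_cut_neighbour]).
   (2) The corner set (W ∩ X) ∪ T ∪ (U ∩ Y) encloses the corner X ∩ Y, so
       it is a cut as soon as X ∩ Y and its complement are nonempty, and
       then has at least k vertices ([corner_card_ge]).
   If W lies within U and one side of U (or symmetrically), (1) shows that
   a single side of W swallows everything else, which gives the laminar
   type.  Otherwise every side of each cut meets the other cut.  Without
   two "opposite" nonempty corners X ∩ Y, X' ∩ Y', all nonempty corners
   share one side, and the cuts are of small type.  With opposite corners,
   (2) applied to both corners and the counts |U| = |W| = k force both cuts
   to have exactly two sides; then all four corners nonempty gives a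
   4-wheel, and an empty corner gives the crossing matching type. *)

(* Decide a membership goal about the vertex z: specialise every hypothesis of
   the form [forall z, _] to z, unfold set membership, and split on every
   remaining atom [z \in S]. *)
Ltac decide_membership z :=
  let T := type of z in
  repeat match goal with H : forall _ : T, is_true _ |- _ => move: (H z); clear H end;
  rewrite ?inE;
  repeat match goal with |- context [in_mem ?x (mem ?S)] => case: (in_mem x (mem S)) end;
  simpl; intros; try discriminate; try reflexivity.

Section Sides.
Variables (V : finType) (e : rel V).
Hypothesis e_sym : symmetric e.

Definition component (S : {set V}) (x : V) : {set V} :=
  [set y | (y \notin S) && connect (avoid e S) x y].

Lemma avoid_sym (S : {set V}) : symmetric (avoid e S).
Proof. by move=> x y; rewrite /avoid /= e_sym [(x \notin S) && _]andbC. Qed.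

Lemma connect_avoidC (S : {set V}) : connect_sym (avoid e S).
Proof. exact: sym_connect_sym (avoid_sym S). Qed.

Lemma connect_avoid_closed (P S : {set V}) (x y : V) :
  (forall u v, u \in P -> avoid e S u v -> v \in P) -> x \in P ->
  connect (avoid e S) x y -> y \in P.
Proof.
move=> clP xP /connectP[p pth ->] {y}; elim: p x pth xP => [|z p IH] x //=.
by case/andP=> axz pth xP; apply: IH pth _; exact: clP xP axz.
Qed.

Lemma connect_avoid_notin (S : {set V}) (x y : V) :
  x \notin S -> connect (avoid e S) x y -> y \notin S.
Proof.
move=> xS cxy; rewrite -in_setC; apply: connect_avoid_closed cxy; last by rewrite inE.
by move=> u v _ /and3P[_ _ vS]; rewrite inE.
Qed.

Lemma connect_avoid_transfer (S S' : {set V}) (x y : V) :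
  (forall z, connect (avoid e S) x z -> z \notin S') ->
  connect (avoid e S) x y -> connect (avoid e S') x y.
Proof.
move=> compS' /connectP[p pth ->] {y}.
elim: p x pth compS' => [|z p IH] x /=; first by rewrite connect0.
case/andP=> axz pth compS'; have /and3P[exz _ _] := axz.
apply: (connect_trans (y := z)).
  apply: connect1; rewrite /avoid /= exz (compS' x (connect0 _ _)).
  exact: compS' z (connect1 axz).
by apply: IH pth _ => w cw; apply: compS'; exact: connect_trans (connect1 axz) cw.
Qed.

Lemma side_component (U X : {set V}) (x : V) : is_side e U X -> x \in X -> X = component U x.
Proof. by case/andP=> _ /forallP sX xX; apply/eqP; move: (sX x); rewrite xX. Qed.

Lemma side_notin (U X : {set V}) (x : V) : is_side e U X -> x \in X -> x \notin U.
Proof. by move=> sX xX; move: (xX); rewrite {1}(side_component sX xX) inE => /andP[]. Qed.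

Lemma side_connect (U X : {set V}) (x y : V) :
  is_side e U X -> x \in X -> y \in X -> connect (avoid e U) x y.
Proof. by move=> sX xX; rewrite {1}(side_component sX xX) inE => /andP[]. Qed.

Lemma side_edge_closed (U X : {set V}) (x y : V) :
  is_side e U X -> x \in X -> e x y -> y \notin U -> y \in X.
Proof.
move=> sX xX exy yU; rewrite (side_component sX xX) inE yU /=; apply: connect1.
by rewrite /avoid /= exy yU (side_notin sX xX).
Qed.

Lemma side_of (U : {set V}) (x : V) : x \notin U -> exists2 X, is_side e U X & x \in X.
Proof.
move=> xU; exists (component U x); last by rewrite inE xU connect0.
apply/andP; split; first by apply/set0Pn; exists x; rewrite inE xU connect0.
apply/forallP=> y; apply/implyP; rewrite inE => /andP[yU cxy].
apply/eqP/setP=> z; rewrite !inE; case: (z \notin U) => //=.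
apply/idP/idP => [cxz | cyz]; last exact: connect_trans cxy cyz.
by rewrite connect_avoidC in cxy; exact: connect_trans cxy cxz.
Qed.

Lemma sides_disjoint (U X Y : {set V}) (z : V) :
  is_side e U X -> is_side e U Y -> X != Y -> z \in X -> z \notin Y.
Proof.
move=> sX sY nXY zX; apply: contra nXY => zY.
by rewrite (side_component sX zX) (side_component sY zY).
Qed.

Lemma side_disjoint_cut (U X : {set V}) : is_side e U X -> [disjoint X & U].
Proof.
move=> sX; apply/pred0P => z /=; apply/negbTE/nandP.
by case: (boolP (z \in X)) => zX; [right; exact: side_notin sX zX | left].
Qed.

Lemma sides_disjointI (U X Y : {set V}) :
  is_side e U X -> is_side e U Y -> X != Y -> [disjoint X & Y].
Proof.
move=> sX sY nXY; apply/pred0P => z /=; apply/negbTE/nandP.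
by case: (boolP (z \in X)) => zX; [right; exact: sides_disjoint sX sY nXY zX | left].
Qed.

Lemma other_side (U X0 : {set V}) : is_cut e U -> exists2 X, is_side e U X & X != X0.
Proof.
case/existsP=> x /existsP[y /and3P[xU yU ncxy]].
have [X sX xX] := side_of xU; have [Y sY yY] := side_of yU.
case: (eqVneq X X0) => [eX | nX]; last by exists X.
exists Y => //; apply: contraNneq ncxy => eY.
by apply: side_connect sX xX _; rewrite eX -eY.
Qed.

Lemma cut_of_closed (S P : {set V}) (x y : V) :
  (forall u v, u \in P -> avoid e S u v -> v \in P) -> x \in P -> x \notin S ->
  y \notin S -> y \notin P -> is_cut e S.
Proof.
move=> clP xP xS yS yP; apply/existsP; exists x; apply/existsP; exists y.
rewrite xS yS /=; apply: contra yP; exact: connect_avoid_closed.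
Qed.

Lemma card_traces (Z : {set V}) (Ps : seq {set V}) :
  pairwise (fun P Q : {set V} => [disjoint P & Q]) Ps ->
  \sum_(P <- Ps) #|Z :&: P| = #|Z :&: \bigcup_(P <- Ps) P|.
Proof.
elim: Ps => [|P Ps IH]; first by rewrite !big_nil setI0 cards0.
rewrite pairwise_cons => /andP[/allP dP /IH {}IH].
rewrite !big_cons IH setIUr; apply/esym/eqP; rewrite (leq_card_setU _ _).2.
apply: disjointWl (subsetIr _ _) _; apply: disjointWr (subsetIr _ _) _.
by rewrite bigcup_seq; apply/bigcup_disjointP => Q /dP.
Qed.

Lemma card_traces_sides (U Z : {set V}) (Xs : seq {set V}) :
  uniq Xs -> all (is_side e U) Xs ->
  #|Z :&: U| + \sum_(X <- Xs) #|Z :&: X| <= #|Z|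
    ?= iff (Z \subset U :|: \bigcup_(X <- Xs) X).
Proof.
move=> uXs sXs.
have disj : pairwise (fun P Q : {set V} => [disjoint P & Q]) (U :: Xs).
  rewrite pairwise_cons; apply/andP; split.
    by apply/allP => X /(allP sXs) sX; rewrite disjoint_sym side_disjoint_cut.
  rewrite uniq_pairwise in uXs; apply: sub_in_pairwise uXs; last exact: sXs.
  by move=> X Y sX sY /= nXY; exact: sides_disjointI sX sY nXY.
have := card_traces Z disj; rewrite !big_cons => ->.
have -> : (Z \subset U :|: \bigcup_(X <- Xs) X) =
          (Z :&: (U :|: \bigcup_(X <- Xs) X) == Z) by apply/setIidPl/eqP.
exact/subset_leqif_cards/subsetIl.
Qed.

(* For sides X of U and Y of W, the corner set (W ∩ X) ∪ (U ∩ W) ∪ (U ∩ Y)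
   encloses the corner X ∩ Y: no edge of G - corner leaves X ∩ Y. *)
Definition corner (U W X Y : {set V}) : {set V} := (W :&: X) :|: (U :&: W) :|: (U :&: Y).

Lemma corner_closed (U W X Y : {set V}) (u v : V) : is_side e U X -> is_side e W Y ->
  u \in X :&: Y -> avoid e (corner U W X Y) u v -> v \in X :&: Y.
Proof.
move=> sX sY /setIP[uX uY] /and3P[euv _ vS]; rewrite /corner !inE in vS.
case: (boolP (v \in U)) => vU.
  case: (boolP (v \in W)) => vW; first by move: vS; rewrite vU vW; case: (v \in X).
  have vY := side_edge_closed sY uY euv vW.
  by move: vS; rewrite vU vY; case: (v \in X); case: (v \in W).
have vX := side_edge_closed sX uX euv vU.
case: (boolP (v \in W)) => vW; first by move: vS; rewrite vX vW.
by rewrite inE vX (side_edge_closed sY uY euv vW).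
Qed.

Lemma corner_separates (U W X Y : {set V}) (x y : V) : is_side e U X -> is_side e W Y ->
  x \in X :&: Y -> y \notin X :&: Y -> ~~ connect (avoid e (corner U W X Y)) x y.
Proof.
move=> sX sY xXY; apply: contra => cxy; apply: connect_avoid_closed cxy => // u v.
exact: corner_closed sX sY.
Qed.

Lemma corner_cut (U W X Y : {set V}) (x z : V) : is_side e U X -> is_side e W Y ->
  x \in X :&: Y -> z \notin U -> z \notin W -> z \notin X :&: Y ->
  is_cut e (corner U W X Y).
Proof.
move=> sX sY xXY zU zW zXY.
have zS : z \notin corner U W X Y by rewrite /corner !inE (negbTE zU) (negbTE zW).
apply: (cut_of_closed (P := X :&: Y) (x := x) (y := z)) => //.
  by move=> u v; exact: corner_closed sX sY.
case/setIP: xXY => xX xY.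
by rewrite /corner !inE (negbTE (side_notin sX xX)) (negbTE (side_notin sY xY)).
Qed.

Lemma card_corner_le (U W X Y : {set V}) :
  #|corner U W X Y| <= #|W :&: X| + #|U :&: W| + #|U :&: Y|.
Proof.
apply: leq_trans (leq_card_setU _ _).1 _; rewrite leq_add2r.
exact: (leq_card_setU _ _).1.
Qed.

Lemma side_within_side (U W X Y : {set V}) (x : V) : is_side e U X ->
  (forall z, z \in X -> z \notin W) -> is_side e W Y -> x \in X -> x \in Y -> X \subset Y.
Proof.
move=> sX dX sY xX xY; apply/subsetP => z zX.
have cxz : connect (avoid e W) x z.
  apply: connect_avoid_transfer (side_connect sX xX zX) => w cw; apply: dX.
  by rewrite (side_component sX xX) inE (connect_avoid_notin (side_notin sX xX) cw) cw.
by rewrite (side_component sY xY) inE (dX z zX) cxz.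
Qed.

Lemma side_disconnects (U X Y : {set V}) : is_side e U X -> is_side e U Y -> X != Y ->
  disconnects e U X.
Proof.
move=> sX sY nXY; split.
- by case/andP: sX.
- exact: side_disjoint_cut sX.
- have [y yY] : exists y, y \in Y by case/andP: sY => /set0Pn.
  apply/set0Pn; exists y; rewrite !inE negb_or (side_notin sY yY) /=.
  by apply: sides_disjoint sY sX _ yY; rewrite eq_sym.
- move=> x y xX; rewrite !inE negb_or => /andP[yU yX]; apply: contra yX => cxy.
  by rewrite (side_component sX xX) inE cxy (connect_avoid_notin (side_notin sX xX) cxy).
Qed.

Lemma enum_side (U : {set V}) (a : nat) (A : nat -> {set V}) (i : nat) :
  enum_sides e U a A -> i < a -> is_side e U (A i).
Proof. by case=> sd _ _ ia; have := sd i ia; rewrite inE. Qed.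

Lemma enum_index (U X : {set V}) (a : nat) (A : nat -> {set V}) :
  enum_sides e U a A -> is_side e U X -> exists2 i, i < a & A i = X.
Proof. by case=> _ sur _ sX; apply: sur; rewrite inE. Qed.

Lemma enum_neq (U : {set V}) (a : nat) (A : nat -> {set V}) (i j : nat) :
  enum_sides e U a A -> i < a -> j < a -> i != j -> A i != A j.
Proof. by case=> _ _ inj ia ja; apply: contra_neq; exact: inj. Qed.

Lemma mem_other_sides (U : {set V}) (a : nat) (A : nat -> {set V}) (i0 : nat) (z : V) :
  enum_sides e U a A -> z \notin U -> z \notin A i0 ->
  z \in \bigcup_(i < a | val i != i0) A i.
Proof.
move=> enA zU zA; have [X sX zX] := side_of zU; have [i ia AX] := enum_index enA sX.
apply/bigcupP; exists (Ordinal ia); last by rewrite AX.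
by apply: contraNneq zA => /= ei; rewrite -ei AX.
Qed.

Lemma other_sides_mem (U : {set V}) (a : nat) (A : nat -> {set V}) (i0 : nat) (z : V) :
  enum_sides e U a A -> i0 < a -> z \in \bigcup_(i < a | val i != i0) A i ->
  exists X, [/\ is_side e U X, X != A i0 & z \in X].
Proof.
move=> enA i0a /bigcupP[i ni zi]; exists (A i); split=> //.
  exact: enum_side enA (ltn_ord i).
exact: enum_neq enA (ltn_ord i) i0a ni.
Qed.

Definition two_sided (U X0 X1 : {set V}) : Prop :=
  [/\ is_side e U X0, is_side e U X1, X0 != X1 &
      forall X, is_side e U X -> X = X0 \/ X = X1].

Lemma enum_two_sided (U : {set V}) (A : nat -> {set V}) (i : nat) :
  enum_sides e U 2 A -> i < 2 -> two_sided U (A i) (A (1 - i)).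
Proof.
move=> enA i2; have ni : i != 1 - i by case: i i2 => [|[|]].
split; [exact: enum_side enA i2 | exact: enum_side enA (leq_subr _ _) |
        exact: enum_neq enA i2 (leq_subr _ _) ni | ].
move=> X /(enum_index enA)[j j2 <-].
by case: i j i2 j2 {ni} => [|[|]] // [|[|]] //= _ _; [left | right | right | left].
Qed.

(* Membership facts of a two-sided cut, in the form used by decide_membership. *)
Lemma two_sided_membership (U X0 X1 : {set V}) : two_sided U X0 X1 ->
  [/\ forall z, (z \in X0) ==> (z \notin U), forall z, (z \in X1) ==> (z \notin U),
      forall z, ~~ ((z \in X0) && (z \in X1)) & forall z, [|| z \in U, z \in X0 | z \in X1]].
Proof.
case=> s0 s1 n01 hX; split=> z.
- by apply/implyP; exact: side_notin s0.
- by apply/implyP; exact: side_notin s1.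
- by rewrite -in_setI (disjoint_setI0 (sides_disjointI s0 s1 n01)) inE.
- case: (boolP (z \in U)) => //= zU; have [X sX zX] := side_of zU.
  by case: (hX X sX) => eX; rewrite -eX zX ?orbT.
Qed.

Lemma card_two_sided (U X0 X1 Z : {set V}) : two_sided U X0 X1 ->
  #|Z :&: U| + #|Z :&: X0| + #|Z :&: X1| = #|Z|.
Proof.
move=> tU; have [s0 s1 n01 _] := tU; have [f0 f1 _ cov] := two_sided_membership tU.
have u01 : uniq [:: X0; X1] by rewrite /= inE n01.
have s01 : all (is_side e U) [:: X0; X1] by rewrite /= s0 s1.
apply/eqP; have := (card_traces_sides Z u01 s01).2.
rewrite !big_cons !big_nil addn0 addnA => ->.
by apply/subsetP => z _; decide_membership z.
Qed.

Lemma card_sides_two_sided (U X0 X1 : {set V}) : two_sided U X0 X1 -> #|sides e U| = 2.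
Proof.
case=> s0 s1 n01 hX; have -> : sides e U = [set X0; X1].
  apply/setP => X; rewrite !inE; apply/idP/idP => [sX | /orP[] /eqP -> //].
  by case: (hX X sX) => ->; rewrite eqxx ?orbT.
by rewrite cards2 n01.
Qed.

End Sides.

Section MinimumCuts.
Variables (V : finType) (e : rel V) (k : nat).
Hypothesis e_sym : symmetric e.
Hypothesis min_cut : forall S : {set V}, is_cut e S -> k <= #|S|.

(* Every vertex of a minimum cut has a neighbour in every side: otherwise
   removing it from the cut would leave a smaller cut. *)
Lemma min_cut_neighbour (U X : {set V}) (u : V) : #|U| = k -> is_cut e U ->
  is_side e U X -> u \in U -> exists2 x, x \in X & e u x.
Proof.
move=> cU ctU sX uU.
case: (boolP [exists x in X, e u x]) => [/existsP[x /andP[xX eux]] | noedge]; first by exists x.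
have [Y sY nYX] := other_side e_sym X ctU.
have [y yY] : exists y, y \in Y by case/andP: sY => /set0Pn.
have [x0 x0X] : exists x0, x0 \in X by case/andP: sX => /set0Pn.
have ct : is_cut e (U :\ u).
  apply: (cut_of_closed (P := X) (x := x0) (y := y)) => //.
  - move=> v w vX /and3P[evw _ wU]; rewrite in_setD1 negb_and negbK in wU.
    case/orP: wU => [/eqP wu | wU]; last exact: side_edge_closed sX vX evw wU.
    by move/existsPn/(_ v): noedge; rewrite vX -wu e_sym evw.
  - by rewrite in_setD1 (negbTE (side_notin sX x0X)) andbF.
  - by rewrite in_setD1 (negbTE (side_notin sY yY)) andbF.
  - exact: sides_disjoint sY sX nYX yY.
have := min_cut ct; have := cardsD1 u U; rewrite uU cU; lia.
Qed.

Lemma corner_card_ge (U W X Y : {set V}) (x z : V) : is_side e U X -> is_side e W Y ->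
  x \in X :&: Y -> z \notin U -> z \notin W -> z \notin X :&: Y ->
  k <= #|W :&: X| + #|U :&: W| + #|U :&: Y|.
Proof.
move=> sX sY xXY zU zW zXY; apply: leq_trans (card_corner_le U W X Y).
exact: min_cut (corner_cut sX sY xXY zU zW zXY).
Qed.

(* Given a side X of U avoiding W, every vertex of U \ W lies in the side
   of W containing X (the vertex has a neighbour in X). *)
Lemma cut_vertex_in_side (U W X Y : {set V}) (u : V) : #|U| = k -> is_cut e U ->
  is_side e U X -> (forall z, z \in X -> z \notin W) -> X \subset Y -> is_side e W Y ->
  u \in U -> u \notin W -> u \in Y.
Proof.
move=> cU ctU sX dX XY sY uU uW; have [x xX eux] := min_cut_neighbour cU ctU sX uU.
by apply: (side_edge_closed sY (subsetP XY x xX)) uW; rewrite e_sym.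
Qed.

Lemma side_avoiding_cut_within (U W X Y : {set V}) (u : V) : #|U| = k -> is_cut e U ->
  is_side e U X -> (forall z, z \in X -> z \notin W) -> is_side e W Y ->
  u \in U -> u \notin W -> u \in Y -> X \subset Y.
Proof.
move=> cU ctU sX dX sY uU uW uY; have [x xX eux] := min_cut_neighbour cU ctU sX uU.
exact: side_within_side sX dX sY xX (side_edge_closed sY uY eux (dX x xX)).
Qed.

Definition in_one_side (U W : {set V}) : bool :=
  [exists X, is_side e U X && (W \subset U :|: X)].

Lemma laminar_side (U W X0 : {set V}) : #|U| = k -> is_cut e U -> #|W| = k -> W != U ->
  is_side e U X0 -> W \subset U :|: X0 ->
  exists Y, [/\ is_side e W Y, U :\: W \subset Y &
                forall X, is_side e U X -> X != X0 -> X \subset Y].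
Proof.
move=> cU ctU cW nWU sX0 WUX0.
have [u uU uW] : exists2 u, u \in U & u \notin W.
  by apply/subsetPn; apply: contra nWU => UW; rewrite eq_sym eqEcard UW cU cW /=.
have [Y sY uY] := side_of e_sym uW.
have dX : forall X, is_side e U X -> X != X0 -> forall z, z \in X -> z \notin W.
  move=> X sX nX z zX; apply: contraL zX => /(subsetP WUX0); rewrite inE.
  case/orP=> [zU | zX0]; first by apply: contraL zU; exact: side_notin sX.
  by apply: sides_disjoint sX0 sX _ zX0; rewrite eq_sym.
have XY X (sX : is_side e U X) (nX : X != X0) : X \subset Y :=
  side_avoiding_cut_within cU ctU sX (dX X sX nX) sY uU uW uY.
have [X1 sX1 nX1] := other_side e_sym X0 ctU.
exists Y; split=> //; apply/subsetP => v; rewrite inE => /andP[vW vU].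
exact: cut_vertex_in_side cU ctU sX1 (dX _ sX1 nX1) (XY _ sX1 nX1) sY vU vW.
Qed.

Lemma in_one_sideC (U W : {set V}) : #|U| = k -> #|W| = k -> is_cut e W -> W != U ->
  in_one_side W U -> in_one_side U W.
Proof.
move=> cU cW ctW nWU /existsP[Y /andP[sY UWY]].
have nUW : U != W by rewrite eq_sym.
have [X [sX WUX _]] := laminar_side cW ctW cU nUW sY UWY.
apply/existsP; exists X; rewrite sX /=; apply/subsetP => z zW; rewrite inE.
by case: (boolP (z \in U)) => //= zU; apply: (subsetP WUX); rewrite inE zU.
Qed.

(* If some side X of U avoided W, U would lie within W and the side of W
   containing X; so otherwise every side of U meets W. *)
Lemma sides_meet_cut (U W X : {set V}) : #|U| = k -> is_cut e U ->
  ~~ in_one_side W U -> is_side e U X -> W :&: X != set0.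
Proof.
move=> cU ctU nUW sX; apply: contraNN nUW => /eqP WX0.
have dX z (zX : z \in X) : z \notin W.
  by apply: contra_eqN WX0 => zW; apply/set0Pn; exists z; rewrite inE zW zX.
have [x xX] : exists x, x \in X by case/andP: sX => /set0Pn.
have [Y sY xY] := side_of e_sym (dX x xX).
have XY := side_within_side sX dX sY xX xY.
apply/existsP; exists Y; rewrite sY /=; apply/subsetP => u uU; rewrite inE.
by case: (boolP (u \in W)) => //= uW; exact: cut_vertex_in_side cU ctU sX dX XY sY uU uW.
Qed.

(* The two set identities of the laminar type, with Y = B j0 the side of W
   given by [laminar_side] and X0 = A i0 the side of U containing W \ U. *)
Lemma laminar_identity_U (U W Y : {set V}) (a : nat) (A : nat -> {set V}) (i0 : nat) :
  enum_sides e U a A -> i0 < a -> is_side e W Y -> U :\: W \subset Y ->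
  (forall X, is_side e U X -> X != A i0 -> X \subset Y) ->
  Y :\: A i0 = (U :\: W) :|: \bigcup_(i < a | val i != i0) A i.
Proof.
move=> enA i0a sY UWY oY; have sA0 := enum_side enA i0a.
apply/setP=> z; rewrite !inE; apply/idP/idP.
- case/andP=> zA zY; have zW := side_notin sY zY.
  case: (boolP (z \in U)) => zU; first by rewrite zW.
  by rewrite (mem_other_sides e_sym enA zU zA) orbT.
- case/orP=> [/andP[zW zU] | /(other_sides_mem enA i0a)[X [sX nX zX]]].
    have zY : z \in Y by apply: (subsetP UWY); rewrite inE zW zU.
    by rewrite zY andbT; apply: contraL zU; exact: side_notin sA0.
  rewrite (subsetP (oY X sX nX) z zX) andbT.
  exact: sides_disjoint sX sA0 nX zX.
Qed.

Lemma laminar_identity_W (U W X0 : {set V}) (b : nat) (B : nat -> {set V}) (j0 : nat) :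
  enum_sides e W b B -> j0 < b -> is_side e U X0 -> W \subset U :|: X0 ->
  U :\: W \subset B j0 -> (forall X, is_side e U X -> X != X0 -> X \subset B j0) ->
  X0 :\: B j0 = (W :\: U) :|: \bigcup_(j < b | val j != j0) B j.
Proof.
move=> enB j0b sX0 WUX0 UWY oY; have sY := enum_side enB j0b.
apply/setP=> z; rewrite !inE; apply/idP/idP.
- case/andP=> zY zX0; have zU := side_notin sX0 zX0.
  case: (boolP (z \in W)) => zW; first by rewrite zU.
  by rewrite (mem_other_sides e_sym enB zW zY) orbT.
- case/orP=> [/andP[zU zW] | /(other_sides_mem enB j0b)[Y [sY' nY zY']]].
    have := subsetP WUX0 z zW; rewrite inE (negbTE zU) /= => ->.
    by rewrite andbT; apply: contraL zW; exact: side_notin sY.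
  have zY := sides_disjoint sY' sY nY zY'; rewrite zY /=.
  have zW := side_notin sY' zY'.
  have zU : z \notin U.
    by apply: contra zY => zU; apply: (subsetP UWY); rewrite inE zU zW.
  have [X sX zX] := side_of e_sym zU.
  case: (eqVneq X X0) => [<- // | nX].
  by move: zY; rewrite (subsetP (oY X sX nX) z zX).
Qed.

Definition laminar_type (U W : {set V}) (a b : nat) (A B : nat -> {set V}) : Prop :=
  laminar_cut e U W /\
  exists i0 j0, [/\ i0 < a, j0 < b,
    B j0 :\: A i0 = (U :\: W) :|: \bigcup_(i < a | val i != i0) A i &
    A i0 :\: B j0 = (W :\: U) :|: \bigcup_(j < b | val j != j0) B j].

Lemma laminar_type_of (U W : {set V}) (a b : nat) (A B : nat -> {set V}) :
  #|U| = k -> is_cut e U -> kcut e k W -> W != U ->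
  enum_sides e U a A -> enum_sides e W b B -> in_one_side U W ->
  laminar_type U W a b A B.
Proof.
move=> cU ctU /andP[ctW /eqP cW] nWU enA enB /existsP[X0 /andP[sX0 WUX0]].
have [i0 i0a AX0] := enum_index enA sX0; subst X0.
have [Y [sY UWY oY]] := laminar_side cU ctU cW nWU sX0 WUX0.
have [j0 j0b BY] := enum_index enB sY; subst Y.
split; first by split=> //; exists (A i0); rewrite ?inE.
exists i0, j0; split=> //; first exact: laminar_identity_U.
exact: laminar_identity_W.
Qed.

Definition small_type (U W : {set V}) : Prop :=
  (exists L, small_with_large e k.-1 U L /\
      forall X, X \in sides e U -> X != L -> X \subset W) \/
  (exists L, small_with_large e k.-1 W L /\
      forall X, X \in sides e W -> X != L -> X \subset U).

(* If all sides of U but X0 lie in W and X0 meets W, the small sides of U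
   fit in W \ X0, so U is (I, k-1)-small with large side X0. *)
Lemma small_cut_of (U W X0 : {set V}) : #|W| = k -> is_cut e U -> is_side e U X0 ->
  W :&: X0 != set0 -> (forall X, is_side e U X -> X != X0 -> X \subset W) ->
  exists L, small_with_large e k.-1 U L /\
            forall X, X \in sides e U -> X != L -> X \subset W.
Proof.
move=> cW ctU sX0 /set0Pn[w wWX0] XW; exists X0; split; last by move=> X; rewrite inE; exact: XW.
split=> //; split; first by rewrite inE.
set P := [set X in sides e U | X != X0].
have trivP : trivIset P.
  apply/trivIsetP => X Y; rewrite !inE => /andP[sX _] /andP[sY _].
  exact: sides_disjointI sX sY.
rewrite (eq_bigl (mem P)); last by move=> X; rewrite !inE.
rewrite (eqP trivP).
have cover_sub : cover P \subset W :\: X0.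
  apply/subsetP => z /bigcupP[X]; rewrite !inE => /andP[sX nX] zX.
  by rewrite (subsetP (XW X sX nX) z zX) andbT; exact: sides_disjoint sX sX0 nX zX.
have := subset_leq_card cover_sub; have := cardsID X0 W.
have : 0 < #|W :&: X0| by apply/card_gt0P; exists w.
lia.
Qed.

Definition opposite_corners (U W : {set V}) : bool :=
  [exists X, exists X', exists Y, exists Y',
     [&& is_side e U X, is_side e U X', is_side e W Y, is_side e W Y',
         X != X', Y != Y', X :&: Y != set0 & X' :&: Y' != set0]].

Lemma opposite_cornersC (U W : {set V}) : opposite_corners U W -> opposite_corners W U.
Proof.
case/existsP=> X /existsP[X' /existsP[Y /existsP[Y' /and4P[sX sX' sY]]]].
case/and5P=> sY' nX nY c c'; apply/existsP; exists Y; apply/existsP; exists Y'.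
apply/existsP; exists X; apply/existsP; exists X'.
by rewrite sX sX' sY sY' nX nY (setIC Y) (setIC Y') c c'.
Qed.

Lemma corners_in_star (U W : {set V}) : is_cut e U -> ~~ opposite_corners U W ->
  (exists2 X0, is_side e U X0 & forall X Y, is_side e U X -> is_side e W Y ->
                                  X :&: Y != set0 -> X = X0) \/
  (exists2 Y0, is_side e W Y0 & forall X Y, is_side e U X -> is_side e W Y ->
                                  X :&: Y != set0 -> Y = Y0).
Proof.
move=> ctU nopp.
have same X X' Y Y' : is_side e U X -> is_side e U X' -> is_side e W Y -> is_side e W Y' ->
    X :&: Y != set0 -> X' :&: Y' != set0 -> X != X' -> Y = Y'.
  move=> sX sX' sY sY' c c' nX; apply/eqP; apply: contraNT nopp => nY.
  apply/existsP; exists X; apply/existsP; exists X'; apply/existsP; exists Y.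
  by apply/existsP; exists Y'; rewrite sX sX' sY sY' nX nY c c'.
case: (boolP [exists X, exists Y, [&& is_side e U X, is_side e W Y & X :&: Y != set0]])
  => [/existsP[X0 /existsP[Y0 /and3P[sX0 sY0 c0]]] | none]; last first.
  have [X0 sX0 _] := other_side e_sym set0 ctU.
  left; exists X0 => // X Y sX sY c; case/negP: none.
  by apply/existsP; exists X; apply/existsP; exists Y; rewrite sX sY c.
case: (boolP [exists X, exists Y, [&& is_side e U X, is_side e W Y, X != X0 & X :&: Y != set0]])
  => [/existsP[X1 /existsP[Y1 /and4P[sX1 sY1 nX1 c1]]] | none]; last first.
  left; exists X0 => // X Y sX sY c; apply/eqP; apply: contraNT none => nX.
  by apply/existsP; exists X; apply/existsP; exists Y; rewrite sX sY nX c.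
right; exists Y0 => // X Y sX sY c.
have Y10 : Y1 = Y0 := same _ _ _ _ sX1 sX0 sY1 sY0 c1 c0 nX1.
case: (eqVneq X X0) => [eX | nX]; last exact: same sX sX0 sY sY0 c c0 nX.
by rewrite -Y10; apply: same sX sX1 sY sY1 c c1 _; rewrite eX eq_sym.
Qed.

Lemma sides_within_of_star (U W X0 : {set V}) :
  (forall X Y, is_side e U X -> is_side e W Y -> X :&: Y != set0 -> X = X0) ->
  forall X, is_side e U X -> X != X0 -> X \subset W.
Proof.
move=> star X sX nX; apply/subsetP => z zX; apply/negPn/negP => zW.
have [Y sY zY] := side_of e_sym zW.
by move/eqP: nX; apply; apply: star sX sY _; apply/set0Pn; exists z; rewrite inE zX zY.
Qed.

Lemma small_type_of (U W : {set V}) : #|U| = k -> is_cut e U -> #|W| = k -> is_cut e W ->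
  (forall X, is_side e U X -> W :&: X != set0) ->
  (forall Y, is_side e W Y -> U :&: Y != set0) ->
  ~~ opposite_corners U W -> small_type U W.
Proof.
move=> cU ctU cW ctW meetW meetU nopp.
case: (corners_in_star ctU nopp) => [[X0 sX0 star] | [Y0 sY0 star]].
  left; apply: small_cut_of cW ctU sX0 (meetW _ sX0) _; exact: sides_within_of_star star.
right; apply: small_cut_of cU ctW sY0 (meetU _ sY0) _.
by apply: sides_within_of_star => Y X sY sX; rewrite setIC; exact: star.
Qed.

(* With opposite corners X ∩ Y and X' ∩ Y', a third side X'' of U misses W:
   the two corner sets, each of size at least k, would otherwise need more
   than |U| + |W| = 2k vertices. *)
Lemma third_side_misses (U W X X' X'' Y Y' : {set V}) : #|U| = k -> #|W| = k ->
  is_side e U X -> is_side e U X' -> is_side e U X'' -> X != X' -> X'' != X -> X'' != X' ->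
  is_side e W Y -> is_side e W Y' -> Y != Y' ->
  X :&: Y != set0 -> X' :&: Y' != set0 -> W :&: X'' = set0.
Proof.
move=> cU cW sX sX' sX'' nXX' nX''X nX''X' sY sY' nYY' /set0Pn[x xXY] /set0Pn[x' x'XY].
have [xX xY] := setIP xXY; have [x'X' x'Y'] := setIP x'XY.
have x'_out : x' \notin X :&: Y.
  by rewrite inE (negbTE (sides_disjoint sX' sX _ x'X')) // eq_sym.
have x_out : x \notin X' :&: Y' by rewrite inE (negbTE (sides_disjoint sX sX' nXX' xX)).
have h := corner_card_ge sX sY xXY (side_notin sX' x'X') (side_notin sY' x'Y') x'_out.
have h' := corner_card_ge sX' sY' x'XY (side_notin sX xX) (side_notin sY xY) x_out.
have uX : uniq [:: X; X'; X''].
  by rewrite /= !inE !negb_or nXX' !(eq_sym _ X'') nX''X nX''X'.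
have uY : uniq [:: Y; Y'] by rewrite /= inE nYY'.
have sXs : all (is_side e U) [:: X; X'; X''] by rewrite /= sX sX' sX''.
have sYs : all (is_side e W) [:: Y; Y'] by rewrite /= sY sY'.
have hW := (card_traces_sides W uX sXs).1; have hU := (card_traces_sides U uY sYs).1.
rewrite !big_cons big_nil (setIC W U) in hW; rewrite !big_cons big_nil in hU.
apply/eqP; rewrite -cards_eq0; apply/eqP; clear -h h' hW hU cU cW; lia.
Qed.

Lemma third_side (U X X' : {set V}) (a : nat) (A : nat -> {set V}) :
  enum_sides e U a A -> 2 < a -> exists2 X'', is_side e U X'' & X'' != X /\ X'' != X'.
Proof.
move=> enA a3.
have lt i : i < 3 -> i < a := fun i3 => leq_trans i3 a3.
have uA : uniq [:: A 0; A 1; A 2].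
  by rewrite /= !inE !negb_or !(enum_neq enA (lt _ _) (lt _ _)).
have : ~~ all (mem [:: X; X']) [:: A 0; A 1; A 2] by apply/negP => /allP /(uniq_leq_size uA).
rewrite -has_predC => /hasP[Z ZA]; rewrite /= !inE negb_or => /andP[nZX nZX'].
exists Z => //; move: ZA; rewrite !inE => /or3P[] /eqP ->; exact: enum_side enA (lt _ _).
Qed.

Lemma no_opposite_corners (U W : {set V}) (a : nat) (A : nat -> {set V}) :
  #|U| = k -> #|W| = k -> enum_sides e U a A -> 2 < a ->
  (forall X, is_side e U X -> W :&: X != set0) -> ~~ opposite_corners U W.
Proof.
move=> cU cW enA a3 meetW; apply/negP.
case/existsP=> X /existsP[X' /existsP[Y /existsP[Y' /and4P[sX sX' sY]]]].
case/and5P=> sY' nX nY c c'; have [X'' sX'' [n1 n2]] := third_side X X' enA a3.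
by move/eqP: (meetW _ sX''); apply; exact: third_side_misses sX sX' sX'' nX n1 n2 sY sY' nY c c'.
Qed.

(* When U and W are both two-sided and all four corners are nonempty, the
   pieces of U and W around the corners form a 4-wheel: each spoke is U or W
   itself, enclosing one of its sides. *)
Lemma wheel_of (U W X0 X1 Y0 Y1 : {set V}) : kcut e k U -> kcut e k W ->
  two_sided e U X0 X1 -> two_sided e W Y0 Y1 ->
  W :&: X0 != set0 -> W :&: X1 != set0 -> U :&: Y0 != set0 -> U :&: Y1 != set0 ->
  X0 :&: Y0 != set0 -> X0 :&: Y1 != set0 -> X1 :&: Y1 != set0 -> X1 :&: Y0 != set0 ->
  forms_wheel e k 4 (U :&: W) (nth set0 [:: U :&: Y0; W :&: X0; U :&: Y1; W :&: X1])
     (nth set0 [:: X0 :&: Y0; X0 :&: Y1; X1 :&: Y1; X1 :&: Y0]).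
Proof.
move=> kU kW tU tW c1 c2 c3 c4 d1 d2 d3 d4.
have [s0 s1 n01 _] := tU; have [t0 t1 m01 _] := tW.
have n10 : X1 != X0 by rewrite eq_sym.
have m10 : Y1 != Y0 by rewrite eq_sym.
have [f1 f2 f3 f4] := two_sided_membership e_sym tU.
have [g1 g2 g3 g4] := two_sided_membership e_sym tW.
have spoke Z P C S : kcut e k Z -> disconnects e Z P -> C = Z -> S = P ->
    kcut e k C /\ disconnects e C S by move=> ? ? -> ->.
split; first done.
split; first by move=> i; case: i => [|[|[|[|i]]]] //= _; split.
split.
  move=> i j; case: i => [|[|[|[|i]]]] //; case: j => [|[|[|[|j]]]] // _ _ _ /=;
  by split; apply/pred0P => z /=; decide_membership z.
split.
  move=> i j; case: i => [|[|[|[|i]]]] //; case: j => [|[|[|[|j]]]] // _ _ /=;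
  by apply/pred0P => z /=; decide_membership z.
split.
  by move=> i; case: i => [|[|[|[|i]]]] // _ /=; split; apply/pred0P => z /=; decide_membership z.
split.
  by rewrite !big_ord_recl big_ord0 /=; apply/setP => z; decide_membership z.
move=> i; case: i => [|[|[|[|i]]]] // _.
- rewrite -[(0 + 2) %% 4]/2 -[(0 + 1) %% 4]/1.
  apply: (spoke U X0 _ _ kU (side_disconnects s0 s1 n01));
    by apply/setP => z; decide_membership z.
- rewrite -[(1 + 2) %% 4]/3 -[(1 + 1) %% 4]/2.
  apply: (spoke W Y1 _ _ kW (side_disconnects t1 t0 m10));
    by apply/setP => z; decide_membership z.
- rewrite -[(2 + 2) %% 4]/0 -[(2 + 1) %% 4]/3.
  apply: (spoke U X1 _ _ kU (side_disconnects s1 s0 n10));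
    by apply/setP => z; decide_membership z.
- rewrite -[(3 + 2) %% 4]/1 -[(3 + 1) %% 4]/0.
  apply: (spoke W Y0 _ _ kW (side_disconnects t0 t1 m01));
    by apply/setP => z; decide_membership z.
Qed.

(* For two-sided minimum cuts with opposite corners X1 ∩ Y1 and X2 ∩ Y2,
   both corner sets are minimum cuts, which forces |W ∩ X2| = |U ∩ Y1| and
   |W ∩ X1| = |U ∩ Y2|. *)
Lemma opposite_corner_counts (U W X1 X2 Y1 Y2 : {set V}) (x y : V) : #|U| = k -> #|W| = k ->
  two_sided e U X1 X2 -> two_sided e W Y1 Y2 -> x \in X1 :&: Y1 -> y \in X2 :&: Y2 ->
  #|W :&: X2| = #|U :&: Y1| /\ #|W :&: X1| = #|U :&: Y2|.
Proof.
move=> cU cW tU tW xXY yXY; have [s1 s2 n12 _] := tU; have [t1 t2 _ _] := tW.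
have [xX1 xY1] := setIP xXY; have [yX2 yY2] := setIP yXY.
have y_out : y \notin X1 :&: Y1 by rewrite inE (negbTE (sides_disjoint s2 s1 _ yX2)) // eq_sym.
have x_out : x \notin X2 :&: Y2 by rewrite inE (negbTE (sides_disjoint s1 s2 n12 xX1)).
have h1 := corner_card_ge s1 t1 xXY (side_notin s2 yX2) (side_notin t2 yY2) y_out.
have h2 := corner_card_ge s2 t2 yXY (side_notin s1 xX1) (side_notin t1 xY1) x_out.
have hW := card_two_sided e_sym W tU; have hU := card_two_sided e_sym U tW.
rewrite (setIC W U) in hW; clear -h1 h2 hW hU cU cW; lia.
Qed.

Lemma corner_matching_cut (U W X1 X2 Y1 Y2 : {set V}) (x y : V) : #|U| = k ->
  two_sided e U X1 X2 -> two_sided e W Y1 Y2 -> #|W :&: X1| = #|U :&: Y2| ->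
  x \in X1 :&: Y1 -> y \in X2 :&: Y2 -> X1 :&: Y2 = set0 ->
  matching_cut e k U X1 (U :&: Y2) (corner U W X1 Y1).
Proof.
move=> cU tU tW cWX1 xXY yXY E12; have [s1 s2 n12 _] := tU; have [t1 t2 _ _] := tW.
have [f1 f2 f3 f4] := two_sided_membership e_sym tU.
have [g1 g2 g3 g4] := two_sided_membership e_sym tW.
have f5 z : ~~ ((z \in X1) && (z \in Y2)) by rewrite -in_setI E12 inE.
have [xX1 xY1] := setIP xXY; have [yX2 yY2] := setIP yXY.
have y_out : y \notin X1 :&: Y1 by rewrite inE (negbTE (sides_disjoint s2 s1 _ yX2)) // eq_sym.
have ct := corner_cut s1 t1 xXY (side_notin s2 yX2) (side_notin t2 yY2) y_out.
have cC : #|corner U W X1 Y1| = k.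
  have := min_cut ct; have := card_corner_le U W X1 Y1; have := card_two_sided e_sym U tW.
  by rewrite setIC; clear -cU cWX1; lia.
split; [by rewrite /kcut ct cC eqxx | | | |].
- by apply/subsetP => z; decide_membership z.
- by apply/subsetP => z; decide_membership z.
- by apply/set0Pn; exists x; move: xX1 xY1; decide_membership x.
split; try by apply/pred0P => z /=; decide_membership z.
(* Since X1 ∩ Y2 is empty, X1 minus the corner set is the corner X1 ∩ Y1,
   while U ∩ Y2 and the vertices outside U ∪ X1 lie outside that corner. *)
move=> u v uP vX1; rewrite connect_avoidC // corner_separates //.
  by move: vX1; decide_membership v.
by move: uP; decide_membership u.
Qed.

Lemma crossing_of (U W X1 X2 Y1 Y2 : {set V}) : kcut e k U -> kcut e k W ->
  two_sided e U X1 X2 -> two_sided e W Y1 Y2 ->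
  W :&: X2 != set0 -> U :&: Y1 != set0 -> U :&: Y2 != set0 ->
  X1 :&: Y1 != set0 -> X2 :&: Y2 != set0 -> X1 :&: Y2 = set0 ->
  [/\ #|W :&: X2| = #|U :&: Y1|, 0 < #|U :&: Y1|,
      #|W :&: X1| = #|U :&: Y2| & 0 < #|U :&: Y2|] /\
  crossing_matching_cut e k U X1 (U :&: Y2) W /\
  (X2 :&: Y1 != set0 -> #|U :&: Y2| <= #|U :&: Y1|).
Proof.
move=> kU kW tU tW wX2 uY1 uY2 /set0Pn[x xXY] /set0Pn[y yXY] E12.
have [_ /eqP cU] := andP kU; have [_ /eqP cW] := andP kW.
have [s1 s2 n12 _] := tU; have [t1 t2 _ _] := tW.
have [f1 f2 f3 f4] := two_sided_membership e_sym tU.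
have [g1 g2 g3 g4] := two_sided_membership e_sym tW.
have [q1 q2] := opposite_corner_counts cU cW tU tW xXY yXY.
split; first by split; rewrite ?card_gt0.
split.
  split; first by split; rewrite ?inE ?subsetIl //; exact: card_sides_two_sided tU.
  exists X2; split; [by rewrite inE | by rewrite eq_sym | exact: wX2 |].
  have -> : (U :\: (U :&: Y2)) :|: (W :&: X1) = corner U W X1 Y1.
    by apply/setP => z; decide_membership z.
  exact: corner_matching_cut cU tU tW q2 xXY yXY E12.
case/set0Pn=> v vXY; have [xX1 xY1] := setIP xXY.
have x_out : x \notin X2 :&: Y1 by rewrite inE (negbTE (sides_disjoint s1 s2 n12 xX1)).
have := corner_card_ge s2 t1 vXY (side_notin s1 xX1) (side_notin t1 xY1) x_out.
have := card_two_sided e_sym W tU; rewrite setIC; clear -cW q2; lia.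
Qed.

Definition wheel_type (U W : {set V}) (A B : nat -> {set V}) : Prop :=
  forms_wheel e k 4 (U :&: W)
    (nth set0 [:: U :&: B 0; W :&: A 0; U :&: B 1; W :&: A 1])
    (nth set0 [:: A 0 :&: B 0; A 0 :&: B 1; A 1 :&: B 1; A 1 :&: B 0]).

Definition crossing_type (U W : {set V}) (A B : nat -> {set V}) : Prop :=
  exists i1 j1, i1 < 2 /\ j1 < 2 /\
    let A1 := A i1 in let A2 := A (1 - i1) in
    let B1 := B j1 in let B2 := B (1 - j1) in
    [/\ A1 :&: B1 != set0, A2 :&: B2 != set0 & A1 :&: B2 = set0] /\
    [/\ #|W :&: A2| = #|U :&: B1|, 0 < #|U :&: B1|,
        #|W :&: A1| = #|U :&: B2| & 0 < #|U :&: B2|] /\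
    crossing_matching_cut e k U A1 (U :&: B2) W /\
    (A2 :&: B1 != set0 -> #|U :&: B2| <= #|U :&: B1|).

Lemma two_sided_types (U W : {set V}) (A B : nat -> {set V}) : kcut e k U -> kcut e k W ->
  enum_sides e U 2 A -> enum_sides e W 2 B ->
  (forall X, is_side e U X -> W :&: X != set0) ->
  (forall Y, is_side e W Y -> U :&: Y != set0) ->
  opposite_corners U W -> wheel_type U W A B \/ crossing_type U W A B.
Proof.
move=> kU kW enA enB meetW meetU.
case/existsP=> X /existsP[X' /existsP[Y /existsP[Y' /and4P[sX sX' sY]]]].
case/and5P=> sY' nX nY c c'.
have [i i2 AX] := enum_index enA sX; have [j j2 BY] := enum_index enB sY.
have [_ _ _ hA] := enum_two_sided enA i2; have [_ _ _ hB] := enum_two_sided enB j2.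
have AX' : X' = A (1 - i) by case: (hA _ sX') => // eX; rewrite eX -AX eqxx in nX.
have BY' : Y' = B (1 - j) by case: (hB _ sY') => // eY; rewrite eY -BY eqxx in nY.
subst X Y X' Y'.
have crossing i1 j1 : i1 < 2 -> j1 < 2 -> A i1 :&: B j1 != set0 ->
    A (1 - i1) :&: B (1 - j1) != set0 -> A i1 :&: B (1 - j1) = set0 ->
    crossing_type U W A B.
  move=> i12 j12 c1 c2 E; exists i1, j1; do 2 (split; first done); split; first by split.
  have s1 := enum_side enA (leq_subr i1 1); have t0 := enum_side enB j12.
  have t1 := enum_side enB (leq_subr j1 1).
  exact: crossing_of kU kW (enum_two_sided enA i12) (enum_two_sided enB j12)
           (meetW _ s1) (meetU _ t0) (meetU _ t1) c1 c2 E.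
have [E | c01] := eqVneq (A i :&: B (1 - j)) set0; first by right; exact: crossing i j i2 j2 c c' E.
have [E | c10] := eqVneq (A (1 - i) :&: B j) set0.
  right; apply: (crossing (1 - i) (1 - j) (leq_subr i 1) (leq_subr j 1)); rewrite ?subKn //.
have corners i' j' : i' < 2 -> j' < 2 -> A i' :&: B j' != set0.
  move=> i'2 j'2; (have [->|->] : i' = i \/ i' = 1 - i by clear -i2 i'2; lia);
    by have [->|->] : j' = j \/ j' = 1 - j by clear -j2 j'2; lia.
left; apply: wheel_of kU kW (enum_two_sided enA (isT : 0 < 2)) (enum_two_sided enB (isT : 0 < 2))
  _ _ _ _ (corners 0 0 isT isT) (corners 0 1 isT isT) (corners 1 1 isT isT) (corners 1 0 isT isT).
- exact/meetW/(enum_side enA (isT : 0 < 2)).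
- exact/meetW/(enum_side enA (isT : 1 < 2)).
- exact/meetU/(enum_side enB (isT : 0 < 2)).
exact/meetU/(enum_side enB (isT : 1 < 2)).
Qed.

End MinimumCuts.

Theorem theorem2 (V : finType) (e : rel V) (k : nat)
    (U W : {set V}) (a b : nat) (A B : nat -> {set V}) :
  symmetric e -> irreflexive e -> graph_connected e -> non_complete e ->
  vertex_connectivity e k -> 4 * k < #|V| ->
  kcut e k U -> kcut e k W -> W != U ->
  2 <= a -> enum_sides e U a A -> 2 <= b -> enum_sides e W b B ->
  let T := U :&: W in
  (* Laminar type *)
  (laminar_cut e U W /\
   exists i0 j0, [/\ i0 < a, j0 < b,
     B j0 :\: A i0 = (U :\: W) :|: \bigcup_(i < a | val i != i0) A i &
     A i0 :\: B j0 = (W :\: U) :|: \bigcup_(j < b | val j != j0) B j])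
  \/
  (* Wheel type *)
  (a = 2 /\ b = 2 /\
   forms_wheel e k 4 T
     (nth set0 [:: U :&: B 0; W :&: A 0; U :&: B 1; W :&: A 1])
     (nth set0 [:: A 0 :&: B 0; A 0 :&: B 1; A 1 :&: B 1; A 1 :&: B 0]))
  \/
  (* Crossing matching type (after possibly renaming sides) *)
  (a = 2 /\ b = 2 /\
   exists i1 j1, i1 < 2 /\ j1 < 2 /\
     let A1 := A i1 in let A2 := A (1 - i1) in
     let B1 := B j1 in let B2 := B (1 - j1) in
     [/\ A1 :&: B1 != set0, A2 :&: B2 != set0 & A1 :&: B2 = set0] /\
     [/\ #|W :&: A2| = #|U :&: B1|, 0 < #|U :&: B1|,
         #|W :&: A1| = #|U :&: B2| & 0 < #|U :&: B2|] /\
     crossing_matching_cut e k U A1 (U :&: B2) W /\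
     (A2 :&: B1 != set0 -> #|U :&: B2| <= #|U :&: B1|))
  \/
  (* Small type *)
  ((exists L, small_with_large e k.-1 U L /\
      forall X, X \in sides e U -> X != L -> X \subset W) \/
   (exists L, small_with_large e k.-1 W L /\
      forall X, X \in sides e W -> X != L -> X \subset U)).
Proof.
move=> e_sym _ _ _ [_ min_cut] _ kU kW nWU a2 enA b2 enB T.
have [[ctU /eqP cU] [ctW /eqP cW]] := (andP kU, andP kW).
have [one_side | ] := boolP (in_one_side e U W || in_one_side e W U).
  have one : in_one_side e U W.
    by case/orP: one_side => // /(in_one_sideC e_sym min_cut cU cW ctW nWU).
  by left; exact (laminar_type_of e_sym min_cut cU ctU kW nWU enA enB one).
rewrite negb_or => /andP[nUW nWU'].
have meetW X (sX : is_side e U X) : W :&: X != set0 :=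
  sides_meet_cut e_sym min_cut cU ctU nWU' sX.
have meetU Y (sY : is_side e W Y) : U :&: Y != set0 :=
  sides_meet_cut e_sym min_cut cW ctW nUW sY.
right; have [opp | nopp] := boolP (opposite_corners e U W); last first.
  by do 2 right; exact (small_type_of e_sym cU ctU cW ctW meetW meetU nopp).
have [a_eq b_eq] : a = 2 /\ b = 2.
  split; apply/eqP; rewrite eqn_leq ?a2 ?b2 andbT leqNgt.
    by apply: contraL opp => a3; exact (no_opposite_corners min_cut cU cW enA a3 meetW).
  apply: contraL (opposite_cornersC opp) => b3.
  exact (no_opposite_corners min_cut cW cU enB b3 meetU).
subst a b; have [wheel | crossing] := two_sided_types e_sym min_cut kU kW enA enB meetW meetU opp.
  by left.
by right; left.
Qed.
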